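(* Let $p\colon E\to B$ be an arc-hedgehog covering with $E$ a Peano space, and let $b_0\in B$ be a point having a countable basis of neighborhoods in $B$. Then the fiber $F=p^{-1}(b_0)$ (with the subspace topology) is a Baire space.
   Context: All maps are continuous. A Peano space is a connected, locally path-connected space. For a class $\mathcal{P}$ of spaces, $p\colon E\to B$ is a $\mathcal{P}$-covering if for every $e_0\in E$, $X\in\mathcal{P}$, $x_0\in X$ and map $f\colon X\to B$ with $f(x_0)=p(e_0)$ there is a unique map $g\colon X\to E$ with $p\circ g=f$, $g(x_0)=e_0$. A directed wedge is $(Z,z_0)=\bigvee_{s\in S}(Z_s,z_s)$, a wedge of pointed Peano spaces indexed by a directed set $S$, topologized so that $U\subset Z\setminus\{z_0\}$ is open iff each $U\cap Z_s$ is open, and $U\ni z_0$ is an open neighborhood of $z_0$ iff each $U\cap Z_s$ is open and there is $t\in S$ with $Z_s\subset U$ for all $s>t$. An arc-hedgehog is a directed wedge with each $(Z_s,z_s)\cong([0,1],0)$; an arc-hedgehog covering is a $\mathcal{P}$-covering for $\mathcal{P}$ the class of all arc-hedgehogs. *)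

From HB Require Import structures.
From mathcomp Require Import all_boot all_order all_algebra.
From mathcomp Require Import all_classical all_reals.
From mathcomp Require Import topology normedtype.
From mathcomp Require Import Rstruct Rstruct_topology.
Set Implicit Arguments. Unset Strict Implicit. Unset Printing Implicit Defensive.
Import Order.TTheory GRing.Theory Num.Theory.
Local Open Scope classical_set_scope.
Local Open Scope ring_scope.

Notation RR := Rdefinitions.R.

Definition unitI : set RR := [set x | 0 <= x <= 1].

Definition path_in (T : topologicalType) (A : set T) (x y : T) :=
  exists g : RR -> T, {within unitI, continuous g} /\ g 0 = x /\ g 1 = y /\
    (forall t, unitI t -> A (g t)).

Definition path_connected (T : topologicalType) (A : set T) :=
  forall x y, A x -> A y -> path_in A x y.

Definition locally_path_connected (T : topologicalType) :=
  forall (x : T) (U : set T), nbhs x U ->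
    exists V : set T, [/\ open V, V x, V `<=` U & path_connected V].

Definition peano_space (T : topologicalType) :=
  connected [set: T] /\ locally_path_connected T.

Definition directed_set (S : Type) (le : S -> S -> Prop) :=
  [/\ inhabited S, (forall s, le s s), (forall s t u, le s t -> le t u -> le s u)
    & (forall s t, exists u, le s u /\ le t u)].

Definition slt (S : Type) (le : S -> S -> Prop) (t s : S) := le t s /\ ~ le s t.

(* Carrier of the arc-hedgehog (wedge of copies Z_s = [0,1] glued at 0):
   None is the wedge point z0, Some (s, x) with 0 < x <= 1 is the point x of
   the arc Z_s. *)
Definition hhpt : Type := {x : RR | 0 < x <= 1}.
Definition hedgehog (S : Type) : Type := option (S * hhpt).

(* the point x \in [0,1] of the s-th arc (x = 0 gives the wedge point) *)
Definition hpt (S : Type) (s : S) (x : RR) : hedgehog S :=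
  omap (fun y : hhpt => (s, y)) (insub x).

Definition open_in_unitI (A : set RR) :=
  exists2 O : set RR, open O & A = O `&` unitI.

Definition hh_open (S : Type) (le : S -> S -> Prop) (U : set (hedgehog S)) :=
  (forall s, open_in_unitI [set x | unitI x /\ U (hpt s x)]) /\
  (U None -> exists t : S, forall s, slt le t s ->
                forall x, unitI x -> U (hpt s x)).

Definition hh_continuous (S : Type) (le : S -> S -> Prop) (T : topologicalType)
  (f : hedgehog S -> T) :=
  forall V : set T, open V -> hh_open le (f @^-1` V).

Definition arc_hedgehog_covering (E B : topologicalType) (p : E -> B) :=
  forall (e0 : E) (S : Type) (le : S -> S -> Prop), directed_set le ->
  forall (x0 : hedgehog S) (f : hedgehog S -> B),
    hh_continuous le f -> f x0 = p e0 ->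
    exists g : hedgehog S -> E,
      [/\ hh_continuous le g, p \o g = f, g x0 = e0 &
          forall g' : hedgehog S -> E,
            hh_continuous le g' -> p \o g' = f -> g' x0 = e0 -> g' = g].

Definition countable_nbhs_basis (T : topologicalType) (b : T) :=
  exists V : nat -> set T, (forall n, nbhs b (V n)) /\
    (forall W, nbhs b W -> exists n, V n `<=` W).

Definition dense_in (T : topologicalType) (F A : set T) :=
  forall O : set T, open O -> O `&` F !=set0 -> O `&` A !=set0.

(* F with the subspace topology is a Baire space: any countable family of
   relatively open (U n `&` F, U n open in T) dense subsets of F has dense
   intersection *)
Definition baire_subspace (T : topologicalType) (F : set T) :=
  forall U : nat -> set T, (forall n, open (U n)) ->
    (forall n, dense_in F (U n `&` F)) ->
    dense_in F (\bigcap_n (U n `&` F)).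

(* Let O meet the fiber F and let the U_k be open and dense in F.  Choose
   fiber points e_k in O and U_k joined by paths b_k whose projections p o b_k
   lie in ever smaller basic neighbourhoods V_(m_k) of b0.  Lifting over an
   arc-hedgehog indexed by the naturals shows that m_k can be chosen so that
   every lift from e_k of a loop inside V_(m_k) stays in O and U_k.  The
   infinite concatenation of the loops p o b_k, p o b_(k+1), ... is again a
   loop at b0, continuous at 1 because the loops shrink to b0; its lift from
   e_k ends in O and U_k, and by unique path lifting all these lifts end at the
   same point of F, which therefore lies in O and in every U_k. *)

From HB Require Import structures.
From mathcomp Require Import all_boot all_order all_algebra.
From mathcomp Require Import all_classical all_reals.
From mathcomp Require Import topology normedtype.
From mathcomp Require Import Rstruct Rstruct_topology.
From mathcomp Require Import ring lra.
Set Implicit Arguments. Unset Strict Implicit. Unset Printing Implicit Defensive.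
Import Order.TTheory GRing.Theory Num.Theory.
Local Open Scope classical_set_scope.
Local Open Scope ring_scope.

Lemma nbhsRP (x : RR) (P : set RR) :
  nbhs x P <-> exists2 e : RR, 0 < e & forall y, `|y - x| < e -> P y.
Proof.
rewrite nbhs_ballP; split => -[e e0 H]; exists e => // y.
  by move=> h; apply: H; rewrite /ball /= distrC.
by rewrite /ball /= distrC; apply: H.
Qed.

Lemma ltr_normlP (u e : RR) : `|u| < e <-> - e < u /\ u < e.
Proof. by rewrite ltr_norml; split => [/andP[]|[-> ->]]. Qed.

Lemma unitIP (x : RR) : unitI x <-> 0 <= x /\ x <= 1.
Proof. by rewrite /unitI /=; split => [/andP[]|[-> ->]]. Qed.

Lemma unitI0 : unitI 0.
Proof. by apply/unitIP; lra. Qed.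

Lemma unitI1 : unitI 1.
Proof. by apply/unitIP; lra. Qed.

(* Continuity on [0,1] in epsilon form, which the pasting and
   reparametrisation arguments below use directly. *)
Definition path_continuous_at (T : topologicalType) (a : RR -> T) (x : RR) :=
  forall V, open V -> V (a x) ->
  exists2 e : RR, 0 < e & forall y, unitI y -> `|y - x| < e -> V (a y).

Definition path_continuous (T : topologicalType) (a : RR -> T) :=
  forall x, unitI x -> path_continuous_at a x.

Lemma path_continuousP (T : topologicalType) (a : RR -> T) :
  path_continuous a <->
  forall V, open V -> open_in_unitI [set x | unitI x /\ V (a x)].
Proof.
split=> [ca V oV|H x ux V oV Vx].
  exists [set y | exists x e, [/\ unitI x, 0 < e, `|y - x| < e &
      forall z, unitI z -> `|z - x| < e -> V (a z)]].
    rewrite openE => y [x [e [ux e0 yx H]]]; apply/nbhsRP.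
    exists (e - `|y - x|); first by rewrite subr_gt0.
    move=> z zy; exists x, e; split => //.
    by have := ler_distD y z x; move: zy; lra.
  apply/seteqP; split => [x [ux Vx]|y [[x [e [ux e0 yx H]]] uy]].
    have [e e0 H] := ca x ux V oV Vx.
    by split => //; exists x, e; split => //; rewrite subrr normr0.
  by split => //; apply: H.
have [O oO eqO] := H V oV.
have [Ox _] : (O `&` unitI) x by rewrite -eqO.
have /nbhsRP [e e0 He] : nbhs x O by move: oO; rewrite openE; apply.
exists e => // y uy yx.
have : (O `&` unitI) y by split => //; apply: He.
by rewrite -eqO => -[].
Qed.

Lemma path_continuous_within (T : topologicalType) (a : RR -> T) :
  {within unitI, continuous a} -> path_continuous a.
Proof.
move/subspace_continuousP => H x ux V oV Vx.
have := H x ux V (open_nbhs_nbhs (conj oV Vx)).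
rewrite /= nbhs_simpl /within /= => /nbhsRP [e e0 He].
by exists e => // y uy yx; apply: He.
Qed.

Lemma path_continuous_cst (T : topologicalType) (c : T) :
  path_continuous (fun=> c).
Proof. by move=> x _ V _ Vc; exists 1 => //; exact: ltr01. Qed.

Lemma path_continuous_comp (T U : topologicalType) (q : T -> U) (l : RR -> T) :
  continuous q -> path_continuous l -> path_continuous (q \o l).
Proof.
move=> /continuousP qc cl x ux V oV Vx.
exact: (cl x ux (q @^-1` V) (qc V oV) Vx).
Qed.

Lemma path_continuous_reparam (T : topologicalType) (l : RR -> T) (h : RR -> RR) :
  path_continuous l -> (forall x, unitI x -> unitI (h x)) ->
  (forall x y e, `|y - x| < e -> `|h y - h x| < e) ->
  path_continuous (l \o h).
Proof.
move=> cl hI h_contr x ux V oV Vx.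
have [e e0 He] := cl (h x) (hI x ux) V oV Vx.
by exists e => // y uy yx; apply: He; [apply: hI | apply: h_contr].
Qed.

Definition paste (T : Type) (u v : RR -> T) (t : RR) : T :=
  if t <= 2^-1 then u (2 * t) else v (2 * t - 1).

Lemma paste_lhalf (T : Type) (u v : RR -> T) x :
  unitI x -> paste u v (x / 2) = u x.
Proof.
move=> /unitIP [x0 x1]; rewrite /paste ifT; last by lra.
by congr u; lra.
Qed.

Lemma paste_rhalf (T : Type) (u v : RR -> T) x : unitI x -> u 1 = v 0 ->
  paste u v ((x + 1) / 2) = v x.
Proof.
move=> /unitIP [x0 x1] uv; rewrite /paste; case: ifP => h.
  have -> : x = 0 by lra.
  by rewrite (_ : 2 * ((0 + 1) / 2) = 1) //; lra.
by congr v; lra.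
Qed.

Lemma path_continuous_paste (T : topologicalType) (u v : RR -> T) :
  path_continuous u -> path_continuous v -> u 1 = v 0 ->
  path_continuous (paste u v).
Proof.
move=> cu cv uv x /unitIP [x0 x1] V oV Vx.
have near_left : exists2 e : RR, 0 < e & forall y, unitI y -> y <= 2^-1 ->
    `|y - x| < e -> V (u (2 * y)).
  have [xl|xr] := leP x (2^-1); last first.
    by exists (x - 2^-1) => [|y _ yl /ltr_normlP]; lra.
  move: Vx; rewrite /paste xl => Vx.
  have [e e0 He] := cu (2 * x) ltac:(apply/unitIP; lra) V oV Vx.
  exists (e / 2) => [|y /unitIP uy yl /ltr_normlP yx]; first lra.
  by apply: He; [apply/unitIP | apply/ltr_normlP]; lra.
have near_right : exists2 e : RR, 0 < e & forall y, unitI y -> 2^-1 < y ->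
    `|y - x| < e -> V (v (2 * y - 1)).
  have [xl|xr] := ltP x (2^-1).
    by exists (2^-1 - x) => [|y _ yr /ltr_normlP]; lra.
  have Vv : V (v (2 * x - 1)).
    move: Vx; rewrite /paste; case: ifP => // xl.
    have -> : x = 2^-1 by lra.
    by rewrite (_ : 2 * 2^-1 = 1) ?subrr -?uv //; lra.
  have [e e0 He] := cv (2 * x - 1) ltac:(apply/unitIP; lra) V oV Vv.
  exists (e / 2) => [|y /unitIP uy yr /ltr_normlP yx]; first lra.
  by apply: He; [apply/unitIP | apply/ltr_normlP]; lra.
have [e1 e10 H1] := near_left; have [e2 e20 H2] := near_right.
exists (Num.min e1 e2); first by rewrite lt_min e10 e20.
move=> y uy; rewrite lt_min => /andP [ye1 ye2]; rewrite /paste.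
by case: ifP => yh; [exact: H1 | apply: H2 => //; rewrite ltNge yh].
Qed.

Definition hedgehog_map (T S : Type) (c : T) (a : S -> RR -> T) : hedgehog S -> T :=
  fun o => if o is Some (s, y) then a s (val y) else c.

Lemma unitI_hhpt (y : hhpt) : unitI (val y).
Proof. by case: y => y /= /andP [y0 y1]; rewrite /unitI /= y1 ltW. Qed.

Lemma hpt0 (S : Type) (s : S) : hpt s 0 = None.
Proof. by rewrite /hpt insubF //= ltxx. Qed.

Lemma hedgehog_map_hpt (T S : Type) (c : T) (a : S -> RR -> T) s x :
  unitI x -> a s 0 = c -> hedgehog_map c a (hpt s x) = a s x.
Proof.
move=> ux a0; rewrite /hpt; case: insubP => [y _ <-|] //=.
move: ux; rewrite /unitI /= => /andP [x0 ->]; rewrite andbT -leNgt => x0'.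
by have -> : x = 0 by apply/eqP; rewrite eq_le x0 x0'.
Qed.

Lemma hh_continuous_hedgehog_map (T : topologicalType) (S : Type)
    (le : S -> S -> Prop) (c : T) (a : S -> RR -> T) :
  (forall s, path_continuous (a s)) -> (forall s, a s 0 = c) ->
  (forall V, open V -> V c ->
     exists t, forall s, slt le t s -> forall x, unitI x -> V (a s x)) ->
  hh_continuous le (hedgehog_map c a).
Proof.
move=> ca a0 a_shrink V oV; split=> [s|/= Vc].
  have -> : [set x | unitI x /\ (hedgehog_map c a @^-1` V) (hpt s x)] =
            [set x | unitI x /\ V (a s x)].
    by apply/seteqP; split => x [ux Vx]; split => //; move: Vx;
      rewrite /= hedgehog_map_hpt.
  exact: (path_continuousP (a s)).1 (ca s) V oV.
have [t Ht] := a_shrink V oV Vc; exists t => s st x ux.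
by rewrite /= hedgehog_map_hpt //; apply: Ht.
Qed.

Lemma path_continuous_hpt (T : topologicalType) (S : Type) (le : S -> S -> Prop)
    (g : hedgehog S -> T) s :
  hh_continuous le g -> path_continuous (fun x => g (hpt s x)).
Proof. by move=> cg; apply/path_continuousP => V oV; exact: (cg V oV).1 s. Qed.

Definition unit_le (_ _ : unit) := True.

Lemma unit_le_directed : directed_set unit_le.
Proof. by split => //; exists tt. Qed.

Lemma hh_continuous_hedgehog_map_unit (T : topologicalType) (a : RR -> T) :
  path_continuous a -> hh_continuous unit_le (hedgehog_map (a 0) (fun=> a)).
Proof.
move=> ca; apply: hh_continuous_hedgehog_map => // V _ _.
by exists tt => s [_ /(_ I)].
Qed.

Definition nat_le (m n : nat) : Prop := (m <= n)%N.

Lemma nat_le_directed : directed_set nat_le.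
Proof.
split; [exact: (inhabits 0%N) | exact: leqnn | move=> s t u; exact: leq_trans |].
by move=> s t; exists (maxn s t); rewrite /nat_le leq_maxl leq_maxr.
Qed.

Section Lifting.
Variables (E B : topologicalType) (p : E -> B).

Definition is_lift (a : RR -> B) (e : E) (l : RR -> E) :=
  [/\ path_continuous l, l 0 = e & forall x, unitI x -> p (l x) = a x].

Lemma is_lift_hpt (S : Type) (le : S -> S -> Prop) (c : B) (a : S -> RR -> B)
    (g : hedgehog S -> E) e s :
  hh_continuous le g -> p \o g = hedgehog_map c a -> g None = e -> a s 0 = c ->
  is_lift (a s) e (fun x => g (hpt s x)).
Proof.
move=> cg pg g0 a0; split; [exact: path_continuous_hpt cg | by rewrite hpt0 |].
move=> x ux; have := congr1 (fun h => h (hpt s x)) pg.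
by rewrite /= hedgehog_map_hpt.
Qed.

Hypothesis cover : arc_hedgehog_covering p.

Lemma lift_exists (a : RR -> B) (e : E) :
  path_continuous a -> a 0 = p e -> exists l, is_lift a e l.
Proof.
move=> ca a0; have [g [cg pg g0 _]] := @cover e unit unit_le unit_le_directed
  None _ (hh_continuous_hedgehog_map_unit ca) a0.
by exists (fun x => g (hpt tt x)); exact: is_lift_hpt cg pg g0 _.
Qed.

Lemma lift_unique (a : RR -> B) (e : E) (l1 l2 : RR -> E) :
  path_continuous a -> is_lift a e l1 -> is_lift a e l2 ->
  forall x, unitI x -> l1 x = l2 x.
Proof.
move=> ca lift1 lift2.
have a0 : a 0 = p e by case: lift1 => _ <- /(_ 0 unitI0).
have [g [_ _ _ g_uniq]] := @cover e unit unit_le unit_le_directed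
  None _ (hh_continuous_hedgehog_map_unit ca) a0.
have lift_g l : is_lift a e l -> hedgehog_map e (fun=> l) = g.
  move=> [cl l0 pl]; apply: g_uniq => //.
    by rewrite -l0; exact: hh_continuous_hedgehog_map_unit.
  by apply: funext => -[[s y]|] /=; [exact: pl (unitI_hhpt y) | rewrite a0].
move=> x ux; have := congr1 (fun h => h (hpt tt x)) (lift_g _ lift1).
by rewrite -(lift_g _ lift2) /= !hedgehog_map_hpt //; [case: lift2 | case: lift1].
Qed.

Lemma lift_paste (u v : RR -> B) (e : E) (lu lv l : RR -> E) :
  path_continuous u -> path_continuous v -> u 1 = v 0 ->
  is_lift u e lu -> is_lift v (lu 1) lv -> is_lift (paste u v) e l ->
  l 1 = lv 1.
Proof.
move=> cu cv uv lift_u lift_v [cl l0 pl].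
have first_half : is_lift u e (l \o (fun x => x / 2)).
  split; [apply: path_continuous_reparam cl _ _ | by rewrite /= mul0r |].
  - by move=> x /unitIP ?; apply/unitIP; lra.
  - by move=> x y eps /ltr_normlP ?; apply/ltr_normlP; lra.
  - by move=> x ux; rewrite /= pl ?paste_lhalf //; apply/unitIP; move/unitIP: ux; lra.
have mid : l (1 / 2) = lu 1 := lift_unique cu first_half lift_u unitI1.
have second_half : is_lift v (lu 1) (l \o (fun x => (x + 1) / 2)).
  split; [apply: path_continuous_reparam cl _ _ | by rewrite /= add0r |].
  - by move=> x /unitIP ?; apply/unitIP; lra.
  - by move=> x y eps /ltr_normlP ?; apply/ltr_normlP; lra.
  - by move=> x ux; rewrite /= pl ?paste_rhalf //; apply/unitIP; move/unitIP: ux; lra.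
have := lift_unique cv second_half lift_v unitI1.
by rewrite /= (_ : (1 + 1) / 2 = 1) //; lra.
Qed.

End Lifting.

Section Concat.
Variables (B : topologicalType) (b0 : B) (g : nat -> RR -> B).
Hypothesis g_cont : forall k, path_continuous (g k).
Hypothesis g0 : forall k, g k 0 = b0.
Hypothesis g1 : forall k, g k 1 = b0.

(* [concat n] runs through the loops g n, g n.+1, ... on the successive
   intervals [1 - 2^-k, 1 - 2^-(k+1)]; [concat_upto n f] stops after f loops
   and then stays at b0. *)
Fixpoint concat_upto (n f : nat) : RR -> B :=
  if f is f.+1 then paste (g n) (concat_upto n.+1 f) else fun=> b0.

(* [reach f t] means t <= 1 - 2^-(f+1): there the values of
   [concat_upto n f'.+1] agree for all f' >= f. *)
Definition reach (f : nat) (t : RR) : bool := 1 <= 2 ^+ f.+1 * (1 - t).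

Definition depth (t : RR) : nat := Num.truncn ((1 - t)^-1).

Definition concat (n : nat) (t : RR) : B := concat_upto n (depth t).+1 t.

Lemma reach0 t : reach 0 t = (t <= 2^-1).
Proof. by rewrite /reach expr1; apply/idP/idP => ?; lra. Qed.

Lemma reachS f t : reach f.+1 t = reach f (2 * t - 1).
Proof.
rewrite /reach exprS; set P := 2 ^+ f.+1.
by have -> : 2 * P * (1 - t) = P * (1 - (2 * t - 1)) by ring.
Qed.

Lemma reach_lt1 f t : reach f t -> t < 1.
Proof.
rewrite /reach => r; have P0 : 0 < 2 ^+ f.+1 :> RR by exact: exprn_gt0.
nra.
Qed.

Lemma depth_gt t : t < 1 -> 1 < 2 ^+ (depth t).+1 * (1 - t).
Proof.
move=> t1; have t0 : 0 < 1 - t by rewrite subr_gt0.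
have d_gt : 1 < (depth t).+1%:R * (1 - t).
  by rewrite -ltr_pdivrMr // div1r; exact: truncnS_gt.
apply: lt_le_trans d_gt (ler_wpM2r (ltW t0) _).
have := ltn_expl (depth t).+1 (ltnSn 1).
by rewrite -(ltr_nat RR) natrX => /ltW.
Qed.

Lemma concat_upto0 n f : concat_upto n f 0 = b0.
Proof. by case: f => [|f] //=; rewrite /paste ifT ?mulr0 //; lra. Qed.

Lemma concat_upto_ge1 n f t : 1 <= t -> concat_upto n f t = b0.
Proof.
elim: f n t => [//|f IH] n t t1 /=; rewrite /paste ifF; last by apply/negbTE; rewrite -ltNge; lra.
by apply: IH; lra.
Qed.

Lemma concat_upto_stable f f' n t : reach f t -> (f <= f')%N ->
  concat_upto n f'.+1 t = concat_upto n f.+1 t.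
Proof.
elim: f f' n t => [|f IH] [|f'] n t r le_ff' //=; rewrite /paste.
  by rewrite -reach0 r.
by case: ifP => // _; apply: IH; rewrite -?reachS.
Qed.

Lemma concat_reach f n t : reach f t -> concat n t = concat_upto n f.+1 t.
Proof.
move=> r; have rd : reach (depth t) t := ltW (depth_gt (reach_lt1 r)).
rewrite /concat; case: (leqP f (depth t)) => h; first exact: concat_upto_stable r h.
by rewrite (concat_upto_stable _ rd (ltnW h)).
Qed.

Lemma concatE n t : concat n t = paste (g n) (concat n.+1) t.
Proof.
have [t1|t1] := ltP t 1; last first.
  rewrite /concat concat_upto_ge1 // /paste ifF; last by apply/negbTE; rewrite -ltNge; lra.
  by rewrite concat_upto_ge1 //; lra.
have : reach (depth t) t := ltW (depth_gt t1).
rewrite {1}/concat; case: (depth t) => [|f] r /=; rewrite /paste.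
  by rewrite -reach0 r.
case: ifP => // _; have r' : reach f (2 * t - 1) by rewrite -reachS.
by rewrite (concat_reach n.+1 r').
Qed.

Lemma concat0 n : concat n 0 = b0.
Proof. by rewrite concatE /paste ifT ?mulr0 //; lra. Qed.

Lemma concat1 n : concat n 1 = b0.
Proof. exact: concat_upto_ge1. Qed.

Lemma concat_in_set (A : set B) N : A b0 ->
  (forall k, (N <= k)%N -> forall y, unitI y -> A (g k y)) ->
  forall y, unitI y -> A (concat N y).
Proof.
move=> Ab gA y uy; rewrite /concat; move: (depth y).+1 => f.
elim: f N y uy gA => [//|f IH] n t /unitIP [t0 t1] gA /=; rewrite /paste.
case: ifP => ht; first by apply: gA => //; apply/unitIP; lra.
apply: IH => [|k nk]; last by apply: gA; exact: ltnW.
by move/negbT: ht; rewrite -ltNge => ht; apply/unitIP; lra.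
Qed.

Lemma path_continuous_concat_upto f n : path_continuous (concat_upto n f).
Proof.
elim: f n => [|f IH] n /=; first exact: path_continuous_cst.
by apply: path_continuous_paste; [exact: g_cont | exact: IH | rewrite g1 concat_upto0].
Qed.

Lemma path_continuous_concat_lt1 n x :
  unitI x -> x < 1 -> path_continuous_at (concat n) x.
Proof.
move=> ux x1 V oV; have := depth_gt x1; set f := depth x; set P := 2 ^+ f.+1 => Px.
have P0 : 0 < P by exact: exprn_gt0.
have PV : P * P^-1 = 1 by rewrite mulfV // gt_eqF.
have near_reach y : `|y - x| < 1 - x - P^-1 -> reach f y.
  by move/ltr_normlP => ?; rewrite /reach -/P; nra.
rewrite (concat_reach n (near_reach x _)); last by rewrite subrr normr0; nra.
move=> Vx; have [e e0 He] := path_continuous_concat_upto ux oV Vx.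
exists (Num.min e (1 - x - P^-1)); first by rewrite lt_min e0 /=; nra.
move=> y uy; rewrite lt_min => /andP [ye yr].
by rewrite (concat_reach n (near_reach y yr)); apply: He.
Qed.

Lemma concat_tail j n y : unitI y -> 2 ^+ j * (1 - y) <= 1 ->
  exists2 z, unitI z & concat n y = concat (n + j) z.
Proof.
elim: j n y => [|j IH] n y uy; first by exists y; rewrite ?addn0.
move: (uy) => /unitIP [y0 y1]; rewrite exprS => h.
have hj : 1 <= 2 ^+ j :> RR by apply: exprn_ege1; lra.
have [yh|yh] := leP y (2^-1).
  have -> : y = 2^-1 by nra.
  exists 1; first exact: unitI1.
  by rewrite concat1 concatE /paste lexx (_ : 2 * 2^-1 = 1) ?g1 //; lra.
rewrite concatE /paste ifF; last by apply/negbTE; rewrite -ltNge.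
have [z uz ->] := IH n.+1 (2 * y - 1) ltac:(apply/unitIP; lra) ltac:(nra).
by exists z; rewrite ?addSnnS.
Qed.

Hypothesis g_shrink : forall W, open W -> W b0 ->
  exists j, forall k, (j <= k)%N -> forall y, unitI y -> W (g k y).

Lemma path_continuous_concat_at1 n : path_continuous_at (concat n) 1.
Proof.
move=> V oV; rewrite concat1 => Vb; have [j Hj] := g_shrink oV Vb.
have P0 : 0 < 2 ^+ j :> RR by exact: exprn_gt0.
have PV : 2 ^+ j * (2 ^+ j)^-1 = 1 :> RR by rewrite mulfV // gt_eqF.
exists (2 ^+ j)^-1 => [|y uy /ltr_normlP [y1 _]]; first by rewrite invr_gt0.
have [z uz ->] := concat_tail n uy ltac:(nra).
apply: concat_in_set Vb _ z uz => k jk; apply: Hj.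
exact: leq_trans (leq_addl n j) jk.
Qed.

Lemma path_continuous_concat n : path_continuous (concat n).
Proof.
move=> x /[dup] ux /unitIP [_ x1]; have [xlt1|x_ge1] := ltP x 1.
  exact: path_continuous_concat_lt1.
have -> : x = 1 by apply/eqP; rewrite eq_le x1.
exact: path_continuous_concat_at1.
Qed.

End Concat.

Lemma countable_nbhs_basis_decr (T : topologicalType) (b : T) :
  countable_nbhs_basis b -> exists V : nat -> set T,
    [/\ forall n, nbhs b (V n), forall W, nbhs b W -> exists n, V n `<=` W &
        forall m n, (m <= n)%N -> V n `<=` V m].
Proof.
move=> [W [W_nbhs W_basis]].
pose V := fix V n := if n is n.+1 then V n `&` W n.+1 else W 0%N.
have V_nbhs n : nbhs b (V n) by elim: n => [|n IH] //=; exact: filterI.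
have V_sub n : V n `<=` W n by case: n => [|n] //= x [].
exists V; split => // [U /W_basis [n Wn]|m n].
  by exists n; exact: subset_trans (V_sub n) Wn.
apply: (@homo_leq _ V (fun A B => B `<=` A)) => [A|A B C AB BC|k x []//].
  exact: subset_refl.
exact: subset_trans BC AB.
Qed.

Lemma dependent_choice (T : Type) (P : nat -> T -> Prop)
    (R : nat -> T -> T -> Prop) (x0 : T) :
  P 0%N x0 -> (forall n x, P n x -> exists2 y, P n.+1 y & R n x y) ->
  exists f : nat -> T, forall n, P n (f n) /\ R n (f n) (f n.+1).
Proof.
move=> P0 step.
have step' (nx : nat * T) : exists y, P nx.1 nx.2 -> P nx.1.+1 y /\ R nx.1 nx.2 y.
  case: nx => n x; have [Pnx|] := pselect (P n x); last by exists x.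
  by have [y] := step n x Pnx; exists y.
have [next Hnext] := choice step'.
pose f := fix f n := if n is n.+1 then next (n, f n) else x0.
have Pf n : P n (f n) by elim: n => [//|n IH]; exact: (Hnext (n, f n) IH).1.
by exists f => n; split => //; exact: (Hnext (n, f n) (Pf n)).2.
Qed.

Section LiftConcat.
Variables (E B : topologicalType) (p : E -> B) (b0 : B) (b : nat -> RR -> E).
Hypothesis p_cont : continuous p.
Hypothesis cover : arc_hedgehog_covering p.
Hypothesis b_cont : forall k, path_continuous (b k).
Hypothesis b_link : forall k, b k 1 = b k.+1 0.
Hypothesis b_fiber : forall k, p (b k 0) = b0.
Hypothesis b_shrink : forall W, open W -> W b0 ->
  exists j, forall k, (j <= k)%N -> forall y, unitI y -> W (p (b k y)).

Let loop k := p \o b k.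

Lemma path_continuous_concat_loops k : path_continuous (concat b0 loop k).
Proof.
apply: path_continuous_concat => // j; first exact: path_continuous_comp.
by rewrite /loop /= b_link.
Qed.

Lemma lift_concat_loops k : exists l, is_lift p (concat b0 loop k) (b k 0) l.
Proof.
apply: (lift_exists cover (@path_continuous_concat_loops k)).
by rewrite concat0.
Qed.

Lemma lift_concat_loops_end k l l' :
  is_lift p (concat b0 loop k) (b k 0) l ->
  is_lift p (concat b0 loop k.+1) (b k.+1 0) l' -> l 1 = l' 1.
Proof.
move=> lift_l lift_l'.
have loop_lift : is_lift p (loop k) (b k 0) (b k) by split=> //; exact: b_cont.
have loop_cont : path_continuous (loop k) := path_continuous_comp p_cont (@b_cont k).
have concat_paste : concat b0 loop k = paste (loop k) (concat b0 loop k.+1).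
  by apply/funext => t; rewrite concatE.
rewrite concat_paste in lift_l.
apply: (lift_paste cover loop_cont (@path_continuous_concat_loops k.+1) _
  loop_lift _ lift_l); first by rewrite /loop /= b_link b_fiber concat0.
by rewrite b_link.
Qed.

End LiftConcat.

Section FiberBaire.
Variables (E B : topologicalType) (p : E -> B) (b0 : B).
Hypothesis p_cont : continuous p.
Hypothesis cover : arc_hedgehog_covering p.
Variable V : nat -> set B.
Hypothesis V_nbhs : forall n, nbhs b0 (V n).
Hypothesis V_basis : forall W, nbhs b0 W -> exists n, V n `<=` W.
Hypothesis V_decr : forall m n, (m <= n)%N -> V n `<=` V m.

Definition lift_confined (m : nat) (e : E) (W : set E) :=
  forall a l, path_continuous a -> a 0 = b0 -> (forall x, unitI x -> V m (a x)) ->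
  is_lift p a e l -> forall x, unitI x -> W (l x).

Lemma lift_confined_mem m e W : p e = b0 -> lift_confined m e W -> W e.
Proof.
move=> pe conf; apply: (conf (fun=> b0) (fun=> e) _ _ _ _ 0 unitI0) => //.
- exact: path_continuous_cst.
- by move=> x _; exact: nbhs_singleton (V_nbhs m).
- by split=> //; exact: path_continuous_cst.
Qed.

Lemma lift_confined_mono m m' e W :
  (m <= m')%N -> lift_confined m e W -> lift_confined m' e W.
Proof. by move=> mm' conf a l ca a0 aV; apply: conf => // x /aV; exact: V_decr. Qed.

Lemma lift_confined_ex e W : p e = b0 -> open W -> W e ->
  exists m, lift_confined m e W.
Proof.
(* Otherwise the escaping loops form a map out of the arc-hedgehog over nat
   whose lift is continuous at the wedge point, so the lifts along arcs far
   enough out stay in W. *)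
move=> pe oW We; apply: contrapT => /forallNP unconfined.
have escape m : exists al : (RR -> B) * (RR -> E),
    [/\ path_continuous al.1, al.1 0 = b0, (forall x, unitI x -> V m (al.1 x)),
        is_lift p al.1 e al.2 & exists2 x, unitI x & ~ W (al.2 x)].
  apply: contrapT => none; apply: (unconfined m) => a l ca a0 aV la x ux.
  by apply: contrapT => nW; apply: none; exists (a, l); split => //; exists x.
have [al Hal] := choice escape; pose a m := (al m).1.
have ca m : path_continuous (a m) by case: (Hal m).
have a0 m : a m 0 = b0 by case: (Hal m).
have c_hh : hh_continuous nat_le (hedgehog_map b0 a).
  apply: hh_continuous_hedgehog_map => // U oU Ub.
  have [n Vn] := V_basis (open_nbhs_nbhs (conj oU Ub)).
  exists n => s [ns _] x ux; apply/Vn/(V_decr ns).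
  by case: (Hal s) => _ _ aV _ _; exact: aV.
have [g [cg pg g0 _]] :=
  @cover e nat nat_le nat_le_directed None _ c_hh (esym pe).
have [t Ht] := (cg W oW).2 ltac:(by rewrite /preimage /= g0).
have t_lt : slt nat_le t t.+1 by split; rewrite /nat_le ?ltnn.
case: (Hal t.+1) => _ _ _ la [x ux]; apply.
rewrite (lift_unique cover (ca t.+1) la (is_lift_hpt cg pg g0 (a0 t.+1)) ux).
exact: Ht.
Qed.

Definition joined_over (m : nat) (e e' : E) := exists b : RR -> E,
  [/\ path_continuous b, b 0 = e, b 1 = e' & forall x, unitI x -> V m (p (b x))].

Variables (O : set E) (U : nat -> set E).
Hypothesis O_open : open O.
Hypothesis U_open : forall n, open (U n).
Hypothesis U_dense : forall n, dense_in (p @^-1` [set b0]) (U n `&` p @^-1` [set b0]).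
Hypothesis E_lpc : locally_path_connected E.

Lemma fiber_chain_step k e m : p e = b0 -> lift_confined m e (O `&` U k) ->
  exists2 s : E * nat, p s.1 = b0 /\ lift_confined s.2 s.1 (O `&` U k.+1) &
                       (m < s.2)%N /\ joined_over m e s.1.
Proof.
move=> pe conf; have [Oe _] := lift_confined_mem pe conf.
have [V' [oV' V'b] V'm] : exists2 V', open_nbhs b0 V' & V' `<=` V m.
  by have := V_nbhs m; rewrite nbhsE.
have oN : open (O `&` p @^-1` V').
  by apply: openI => //; exact: (proj1 (continuousP p) p_cont).
have V'e : V' (p e) by rewrite pe.
have [P [oP Pe PN pcP]] := E_lpc (open_nbhs_nbhs (conj oN (conj Oe V'e))).
have [e' [Pe' [Ue' pe']]] := U_dense k.+1 oP (ex_intro _ e (conj Pe pe)).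
have [Oe' _] := PN e' Pe'.
have [b [cb [b0e [b1e bP]]]] := pcP e e' Pe Pe'.
have [m0 conf0] := lift_confined_ex pe' (openI O_open (U_open k.+1)) (conj Oe' Ue').
exists (e', maxn m0 m.+1); split => //=.
- exact: lift_confined_mono (leq_maxl _ _) conf0.
- by rewrite leq_max ltnSn orbT.
- exists b; split => //; first exact: path_continuous_within.
  by move=> x ux; apply: V'm; have [] := PN _ (bP x ux).
Qed.

Lemma fiber_chain : O `&` p @^-1` [set b0] !=set0 ->
  exists (e : nat -> E) (m : nat -> nat), [/\ forall k, p (e k) = b0,
    forall k, lift_confined (m k) (e k) (O `&` U k),
    {homo m : i j / (i <= j)%N}, forall k, (k <= m k)%N &
    forall k, joined_over (m k) (e k) (e k.+1)].
Proof.
move=> OF; have [e0 [Oe0 [U0e0 pe0]]] := U_dense 0%N O_open OF.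
have [m0 conf0] :=
  lift_confined_ex pe0 (openI O_open (U_open 0%N)) (conj Oe0 U0e0).
have [s Hs] := @dependent_choice _
  (fun k s => p s.1 = b0 /\ lift_confined s.2 s.1 (O `&` U k))
  (fun _ s s' => (s.2 < s'.2)%N /\ joined_over s.2 s.1 s'.1)
  (e0, m0) (conj pe0 conf0) (fun k s '(conj pe conf) => fiber_chain_step pe conf).
have m_lt k : ((s k).2 < (s k.+1).2)%N by have [_ []] := Hs k.
exists (fun k => (s k).1), (fun k => (s k).2); split => [k|k||k|k].
- by have [[]] := Hs k.
- by have [[]] := Hs k.
- exact: homo_leq leqnn leq_trans (fun k => ltnW (m_lt k)).
- by elim: k => [//|k IH]; exact: leq_ltn_trans IH (m_lt k).
- by have [_ []] := Hs k.
Qed.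

Lemma fiber_meets_bigcap : O `&` p @^-1` [set b0] !=set0 ->
  O `&` \bigcap_n (U n `&` p @^-1` [set b0]) !=set0.
Proof.
move=> OF; have [e [m [pe conf m_homo m_ge joined]]] := fiber_chain OF.
have [b Hb] := choice joined.
have b_cont k : path_continuous (b k) by case: (Hb k).
have b_start k : b k 0 = e k by case: (Hb k).
have b_link k : b k 1 = b k.+1 0 by case: (Hb k) => _ _ ->.
have b_fiber k : p (b k 0) = b0 by rewrite b_start.
have b_small k x : unitI x -> V (m k) (p (b k x)) by case: (Hb k) => _ _ _; apply.
have b_shrink W : open W -> W b0 ->
    exists j, forall k, (j <= k)%N -> forall y, unitI y -> W (p (b k y)).
  move=> oW Wb; have [n Vn] := V_basis (open_nbhs_nbhs (conj oW Wb)).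
  exists n => k nk y uy; apply/Vn/(V_decr (leq_trans nk (m_ge k))).
  exact: b_small.
have [L lift_L] :=
  choice (lift_concat_loops p_cont cover b_cont b_link b_fiber b_shrink).
have L_end k : L k 1 = L 0%N 1.
  elim: k => [//|k <-]; symmetry.
  exact: lift_concat_loops_end p_cont cover b_cont b_link b_fiber b_shrink _ _ _ (lift_L k) (lift_L k.+1).
have L_fiber k : p (L k 1) = b0.
  by case: (lift_L k) => _ _ ->; [exact: concat1 | exact: unitI1].
have L_in k : (O `&` U k) (L k 1).
  apply: (conf k) unitI1; last by rewrite -b_start; exact: lift_L.
  - exact: path_continuous_concat_loops p_cont b_cont b_link b_fiber b_shrink k.
  - exact: concat0.
  - apply: concat_in_set => [|j kj y uy]; first exact: nbhs_singleton (V_nbhs _).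
    exact: V_decr (m_homo _ _ kj) _ (b_small j y uy).
exists (L 0%N 1); split; first by have [] := L_in 0%N.
by move=> n _; rewrite -(L_end n); split; [have [] := L_in n | exact: L_fiber].
Qed.

End FiberBaire.

Unset Implicit Arguments.

Theorem proposition3p11 (E B : topologicalType) (p : E -> B) (b0 : B) :
  continuous p -> arc_hedgehog_covering p -> peano_space E ->
  countable_nbhs_basis b0 ->
  baire_subspace (p @^-1` [set b0]).
Proof.
move=> p_cont cover [_ E_lpc] /countable_nbhs_basis_decr [V [V_nbhs V_basis V_decr]].
move=> U U_open U_dense O O_open.
exact: (fiber_meets_bigcap p_cont cover V_nbhs V_basis V_decr O_open U_open
  U_dense E_lpc).
Qed.
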